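(* Let $h$ be a positive integer. The sequences $(n_h(k))_{k=1}^{\infty}$, $(m_h(k))_{k=1}^{\infty}$, $(n^{\sharp}_h(k))_{k=1}^{\infty}$, and $(m^{\sharp}_h(k))_{k=1}^{\infty}$ are strictly increasing.
   Context: For integers $a<b$, an interval of integers is $[a,b]=\{j\in\mathbf{Z}: a\le j\le b\}$ (so every interval has at least two elements), and $[0,0]=\{0\}$. For a set $A$ of integers, $hA=\{a_1+\cdots+a_h: a_i\in A\}$ (summands not necessarily distinct). For a nonempty finite set $A\subseteq\mathbf{Z}$ with $0\in hA$, $\ell_h(A)$ is the largest integer $n\ge 0$ with $[0,n]\subseteq hA$. For a nonempty finite set $A\subseteq\mathbf{Z}$, $\ell^{\sharp}_h(A)$ is the largest integer $n\ge 1$ such that $[c,c+n]\subseteq hA$ for some $c\in\mathbf{Z}$ (undefined if $hA$ contains no interval). With $\mathcal{A}_X(k)=\{A\subseteq X:|A|=k\}$ and $\mathbf{N}_0=\{0,1,2,\ldots\}$, define (maxima over those $A$ for which the quantity is defined) $n_h(k)=\max\{\ell_h(A): A\in\mathcal{A}_{\mathbf{N}_0}(k)\}$, $n^{\sharp}_h(k)=\max\{\ell^{\sharp}_h(A): A\in\mathcal{A}_{\mathbf{N}_0}(k)\}$, $m_h(k)=\max\{\ell_h(A): A\in\mathcal{A}_{\mathbf{Z}}(k)\}$, $m^{\sharp}_h(k)=\max\{\ell^{\sharp}_h(A): A\in\mathcal{A}_{\mathbf{Z}}(k)\}$. *)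

From HB Require Import structures.
From mathcomp Require Import all_boot all_order all_algebra.
From mathcomp Require Import finmap.
Set Implicit Arguments. Unset Strict Implicit. Unset Printing Implicit Defensive.
Import Order.TTheory GRing.Theory Num.Theory.
Local Open Scope fset_scope.
Local Open Scope ring_scope.

Definition in_hsum (h : nat) (A : {fset int}) (x : int) : Prop :=
  exists s : seq int,
    size s = h /\ (forall a, a \in s -> a \in A) /\ \sum_(a <- s) a = x.

Definition interval_in_hsum (h : nat) (A : {fset int}) (a b : int) : Prop :=
  forall j : int, a <= j <= b -> in_hsum h A j.

Definition is_ell (h : nat) (A : {fset int}) (n : nat) : Prop :=
  interval_in_hsum h A 0 n%:Z /\
  (forall m : nat, interval_in_hsum h A 0 m%:Z -> (m <= n)%N).

Definition is_ell_sharp (h : nat) (A : {fset int}) (n : nat) : Prop :=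
  (1 <= n)%N /\ (exists c : int, interval_in_hsum h A c (c + n%:Z)) /\
  (forall m : nat, (1 <= m)%N ->
     (exists c : int, interval_in_hsum h A c (c + m%:Z)) -> (m <= n)%N).

Definition is_max_over (Adm : {fset int} -> Prop)
  (L : {fset int} -> nat -> Prop) (k v : nat) : Prop :=
  (exists A : {fset int}, Adm A /\ #|` A| = k /\ L A v) /\
  (forall (A : {fset int}) (l : nat), Adm A -> #|` A| = k -> L A l -> (l <= v)%N).

Definition subset_N0 (A : {fset int}) : Prop := forall a, a \in A -> 0 <= a.
Definition subset_Z (A : {fset int}) : Prop := True.

(* is_n h k v  <->  n_h(k) = v, etc. *)
Definition is_n (h k v : nat) := is_max_over subset_N0 (is_ell h) k v.
Definition is_n_sharp (h k v : nat) := is_max_over subset_N0 (is_ell_sharp h) k v.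
Definition is_m (h k v : nat) := is_max_over subset_Z (is_ell h) k v.
Definition is_m_sharp (h k v : nat) := is_max_over subset_Z (is_ell_sharp h) k v.

(* The (partially defined) sequence f, starting at index k0, is well defined
   and strictly increasing: f(k) < f(k+1) for all k >= k0. *)
Definition strictly_increasing_from (f : nat -> nat -> Prop) (k0 : nat) : Prop :=
  forall k : nat, (k0 <= k)%N ->
    exists v v' : nat, f k v /\ f k.+1 v' /\ (v < v')%N.

From mathcomp Require Import all_boot all_order all_algebra.
From mathcomp Require Import finmap zify.
From Stdlib Require ClassicalDescription.
Set Implicit Arguments. Unset Strict Implicit. Unset Printing Implicit Defensive.
Import Order.TTheory GRing.Theory Num.Theory.
Local Open Scope fset_scope.
Local Open Scope ring_scope.

(* Since |hA| <= |A|^h, both ell_h(A) and ell#_h(A) exist once hA contains an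
   interval. Suppose hA contains [c, c + v] but not c + v + 1, and let a be the
   least summand in a representation of c as a sum of h elements of A. Then
   x := c + v + 1 - (h - 1) a is not in A, the h-fold sumset of A ∪ {x} contains
   [c, c + v + 1], and x > a (as c >= h a), so x >= 0 whenever A lies in N_0.
   Thus an optimal set of size k extends to a set of size k + 1 whose sumset
   contains a strictly longer interval. *)

Lemma bounded_nat_max (P : nat -> Prop) (b m : nat) :
  P m -> (forall n, P n -> (n <= b)%N) ->
  exists n, P n /\ forall j, P j -> (j <= n)%N.
Proof.
move=> Pm Pb.
pose p n : bool :=
  if ClassicalDescription.excluded_middle_informative (P n) then true else false.
have pP n : reflect (P n) (p n).
  by rewrite /p; case: ClassicalDescription.excluded_middle_informative => Pn;
    constructor.
have [n /pP Pn n_max] := ex_maxnP (ex_intro p m (introT (pP m) Pm))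
                                  (fun n pn => Pb n (elimT (pP n) pn)).
by exists n; split=> // j /pP; apply: n_max.
Qed.

Lemma exists_mem_le_mean (R : realDomainType) (s : seq R) : s != [::] ->
  exists2 a, a \in s & (size s)%:R * a <= \sum_(x <- s) x.
Proof.
elim: s => // x [|y t] IH _; first by exists x; rewrite ?mem_head // big_seq1 mul1r.
have [b bt Hb] := IH isT.
exists (Order.min x b).
  by rewrite /Order.min; case: ifP => _; rewrite inE ?eqxx ?bt ?orbT.
rewrite big_cons [size _]/= -addn1 natrD mulrDl mul1r addrC.
apply: lerD; first by rewrite ge_min lexx.
by apply: le_trans Hb; rewrite ler_wpM2l // ge_min lexx orbT.
Qed.

Fixpoint hsums (h : nat) (s : seq int) : seq int :=
  if h is h'.+1 then [seq a + x | a <- s, x <- hsums h' s] else [:: 0].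

Lemma size_hsums h s : size (hsums h s) = (size s ^ h)%N.
Proof. by elim: h => //= h IH; rewrite size_allpairs IH expnS. Qed.

Lemma mem_hsums h (A : {fset int}) x : in_hsum h A x -> x \in hsums h (enum_fset A).
Proof.
elim: h x => [|h IH] x [s [sz [sA <-]]].
  by case: s sz sA => // _ _; rewrite big_nil inE.
case: s sz sA => // a t [sz] sA /=.
rewrite big_cons; apply: allpairs_f; first by apply: sA; rewrite mem_head.
by apply: IH; exists t; split=> //; split=> // b bt; apply: sA; rewrite inE bt orbT.
Qed.

Lemma in_hsum_sub h (A B : {fset int}) j :
  {subset A <= B} -> in_hsum h A j -> in_hsum h B j.
Proof. by move=> AB [s [sz [sA sj]]]; exists s; split=> //; split=> // a /sA /AB. Qed.

Lemma in_hsum_cons_nseq h (A : {fset int}) x a :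
  x \in A -> a \in A -> in_hsum h.+1 A (x + a *+ h).
Proof.
move=> xA aA; exists (x :: nseq h a); split; first by rewrite /= size_nseq.
split; last by rewrite big_cons big_nseq iter_addr addr0.
by move=> y; rewrite inE mem_nseq => /orP [/eqP -> | /andP [_ /eqP ->]].
Qed.

Lemma in_hsum_mem h (A : {fset int}) x :
  (0 < h)%N -> 0 \in A -> x \in A -> in_hsum h A x.
Proof.
case: h => // h _ A0 xA.
by have := in_hsum_cons_nseq h xA A0; rewrite mul0rn addr0.
Qed.

Lemma interval_in_hsum_card h (A : {fset int}) c (m : nat) :
  interval_in_hsum h A c (c + m%:Z) -> (m < #|` A| ^ h)%N.
Proof.
move=> cm; rewrite -size_hsums.
have -> : m.+1 = size [seq c + i%:Z | i <- iota 0 m.+1] by rewrite size_map size_iota.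
apply: uniq_leq_size; first by rewrite map_inj_uniq ?iota_uniq // => i j /addrI [].
move=> y /mapP [i]; rewrite mem_iota add0n => im ->.
by apply/mem_hsums/cm; rewrite lerDl lerD2l lez_nat -ltnS im.
Qed.

Lemma interval_in_hsum_succ h (A : {fset int}) c (v : nat) :
  interval_in_hsum h A c (c + v%:Z) -> in_hsum h A (c + v.+1%:Z) ->
  interval_in_hsum h A c (c + v.+1%:Z).
Proof.
move=> cv top j /andP [cj jv]; case: (lerP j (c + v%:Z)) => jcv.
  by apply: cv; rewrite cj jcv.
by have -> : j = c + v.+1%:Z by lia.
Qed.

Lemma interval_in_hsum_extend h (A : {fset int}) c (v : nat) : (0 < h)%N ->
  interval_in_hsum h A c (c + v%:Z) -> ~ in_hsum h A (c + v.+1%:Z) ->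
  exists x, [/\ x \notin A, exists2 a, a \in A & a < x
              & interval_in_hsum h (x |` A) c (c + v.+1%:Z)].
Proof.
case: h => // h _ cv top.
have [s [sz [sA sc]]] : in_hsum h.+1 A c by apply: cv; rewrite lexx lerDl.
have [a aS ha] : exists2 a, a \in s & (size s)%:R * a <= \sum_(y <- s) y.
  by apply: exists_mem_le_mean; case: s sz {sA sc}.
rewrite sz sc in ha; have aA := sA _ aS.
pose x := c + v.+1%:Z - a *+ h.
have top_x B : x \in B -> a \in B -> in_hsum h.+1 B (c + v.+1%:Z).
  by move=> xB aB; have := in_hsum_cons_nseq h xB aB; rewrite subrK.
exists x; split.
- by apply/negP => xA; apply/top/top_x.
- by exists a => //; rewrite /x -mulr_natr; move: ha; nia.
- apply: interval_in_hsum_succ; last by apply: top_x; rewrite !inE ?eqxx ?aA ?orbT.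
  by move=> j /cv; apply: in_hsum_sub => y yA; rewrite inE yA orbT.
Qed.

Lemma subset_N0_fsetU1 (A : {fset int}) a x :
  subset_N0 A -> a \in A -> a < x -> subset_N0 (x |` A).
Proof.
move=> A_ge0 aA ax y; rewrite !inE => /orP [/eqP -> | /A_ge0 //].
exact: le_trans (A_ge0 a aA) (ltW ax).
Qed.

Section LongestInterval.
Variable h : nat.

Lemma is_ell_bounded (A : {fset int}) l : is_ell h A l -> (l <= #|` A| ^ h)%N.
Proof. by move=> [ell _]; apply/ltnW/(@interval_in_hsum_card h A 0); rewrite add0r. Qed.

Lemma is_ell_sharp_bounded (A : {fset int}) l : is_ell_sharp h A l -> (l <= #|` A| ^ h)%N.
Proof. by move=> [_ [[c ell] _]]; apply/ltnW/interval_in_hsum_card/ell. Qed.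

Lemma is_ell_exists (A : {fset int}) (m : nat) :
  interval_in_hsum h A 0 m%:Z -> exists2 l, is_ell h A l & (m <= l)%N.
Proof.
move=> Am.
have [|l [Al l_max]] :=
  @bounded_nat_max (fun n => interval_in_hsum h A 0 n%:Z) (#|` A| ^ h) m Am.
  by move=> n An; apply/ltnW/(@interval_in_hsum_card h A 0); rewrite add0r.
by exists l; [split | apply: l_max].
Qed.

Lemma is_ell_sharp_exists (A : {fset int}) c (m : nat) : (0 < m)%N ->
  interval_in_hsum h A c (c + m%:Z) -> exists2 l, is_ell_sharp h A l & (m <= l)%N.
Proof.
move=> m_gt0 Acm.
pose P n := (0 < n)%N /\ exists c, interval_in_hsum h A c (c + n%:Z).
have [|l [[l_gt0 Al] l_max]] :=
  @bounded_nat_max P (#|` A| ^ h) m (conj m_gt0 (ex_intro _ c Acm)).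
  by move=> n [_ [c' An]]; apply/ltnW/interval_in_hsum_card/An.
exists l; last by apply: l_max; split; last exists c.
by split=> //; split=> // n n_gt0 An; apply: l_max.
Qed.

Hypothesis h_gt0 : (0 < h)%N.

Lemma is_ell_step (A : {fset int}) v : is_ell h A v ->
  exists x, [/\ x \notin A, exists2 a, a \in A & a < x
              & exists2 l, is_ell h (x |` A) l & (v < l)%N].
Proof.
move=> [Av v_max].
have Av' : interval_in_hsum h A 0 (0 + v%:Z) by rewrite add0r.
have [|x [xA xa Axv]] := interval_in_hsum_extend h_gt0 Av'.
  move=> top; suff: (v < v)%N by rewrite ltnn.
  by apply: v_max; rewrite -[v.+1%:Z]add0r; apply: interval_in_hsum_succ.
rewrite add0r in Axv.
by have [l ell vl] := is_ell_exists Axv; exists x; split=> //; exists l.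
Qed.

Lemma is_ell_sharp_step (A : {fset int}) v : is_ell_sharp h A v ->
  exists x, [/\ x \notin A, exists2 a, a \in A & a < x
              & exists2 l, is_ell_sharp h (x |` A) l & (v < l)%N].
Proof.
move=> [_ [[c Acv] v_max]].
have [|x [xA xa Axv]] := interval_in_hsum_extend h_gt0 Acv.
  move=> top; suff: (v < v)%N by rewrite ltnn.
  by apply: v_max => //; exists c; apply: interval_in_hsum_succ.
have [l ell vl] := is_ell_sharp_exists (ltn0Sn v) Axv.
by exists x; split=> //; exists l.
Qed.

End LongestInterval.

Section MaxOverStrictlyIncreasing.
Variables (Adm : {fset int} -> Prop) (L : {fset int} -> nat -> Prop).
Variables (bound : nat -> nat) (k0 : nat).
Hypothesis Adm_fsetU1 : forall A a x, Adm A -> a \in A -> a < x -> Adm (x |` A).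
Hypothesis L_bounded : forall A l, L A l -> (l <= bound #|` A|)%N.
Hypothesis L_step : forall A l, L A l ->
  exists x, [/\ x \notin A, exists2 a, a \in A & a < x
              & exists2 l', L (x |` A) l' & (l < l')%N].
Hypothesis L_base : exists A l, [/\ Adm A, #|` A| = k0 & L A l].

Lemma max_over_step A l : Adm A -> L A l ->
  exists A' l', [/\ Adm A', #|` A'| = #|` A|.+1, L A' l' & (l < l')%N].
Proof.
move=> AA LA; have [x [xA [a aA ax] [l' LA' ll']]] := L_step LA.
by exists (x |` A), l'; rewrite cardfsU1 xA; split=> //; apply: Adm_fsetU1 ax.
Qed.

Lemma max_over_attained k : (k0 <= k)%N -> exists A l, [/\ Adm A, #|` A| = k & L A l].
Proof.
move=> /subnKC <-; elim: (k - k0)%N => [|d [A [l [AA cA LA]]]]; first by rewrite addn0.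
have [A' [l' [AA' cA' LA' _]]] := max_over_step AA LA.
by exists A', l'; rewrite addnS cA' cA.
Qed.

Lemma max_over_exists k A l : Adm A -> #|` A| = k -> L A l ->
  exists v, is_max_over Adm L k v.
Proof.
move=> AA cA LA.
pose P v := exists A, [/\ Adm A, #|` A| = k & L A v].
have P_bounded n : P n -> (n <= bound k)%N by move=> [B [_ <- /L_bounded]].
have [v [[B [AB cB LB]] v_max]] :=
  @bounded_nat_max P (bound k) l (ex_intro _ A (And3 AA cA LA)) P_bounded.
by exists v; split=> [|A' n AA' cA' LA']; [exists B | apply: v_max; exists A'].
Qed.

Lemma max_over_strictly_increasing : strictly_increasing_from (is_max_over Adm L) k0.
Proof.
move=> k /max_over_attained [A [l [AA cA LA]]].
have [v [[B [AB [cB LB]]] v_max]] := max_over_exists AA cA LA.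
have [B' [l' [AB' cB' LB' ll']]] := max_over_step AB LB.
have cB'k : #|` B'| = k.+1 by rewrite cB' cB.
have [v' v'_max] := max_over_exists AB' cB'k LB'.
exists v, v'; split; first by split=> //; exists B.
by split=> //; apply: leq_trans ll' (v'_max.2 _ _ AB' cB'k LB').
Qed.

End MaxOverStrictlyIncreasing.

Theorem mainTheorem2 (h : nat) (hpos : (0 < h)%N) :
  strictly_increasing_from (is_n h) 1 /\
  strictly_increasing_from (is_m h) 1 /\
  strictly_increasing_from (is_n_sharp h) 2 /\
  strictly_increasing_from (is_m_sharp h) 2.
Proof.
have [l1 ell1 _] : exists2 l, is_ell h [fset 0] l & (0 <= l)%N.
  apply: is_ell_exists => j /andP [j_ge0 j_le0]; have -> : j = 0 by lia.
  by apply: in_hsum_mem; rewrite ?inE.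
have [l2 ell2 _] : exists2 l, is_ell_sharp h [fset 0; 1] l & (1 <= l)%N.
  apply: (@is_ell_sharp_exists _ _ 0) => // j j01.
  by apply: in_hsum_mem; rewrite ?inE //; move: j01; rewrite add0r; lia.
have N0_0 : subset_N0 [fset 0] by move=> a; rewrite inE => /eqP ->.
have N0_01 : subset_N0 [fset 0; 1] by move=> a; rewrite !inE => /orP [] /eqP ->.
split; [|split; [|split]].
- apply: (max_over_strictly_increasing (bound := expn^~ h) (@subset_N0_fsetU1)
            (@is_ell_bounded h) (is_ell_step hpos)).
  by exists [fset 0], l1; rewrite cardfs1.
- apply: (max_over_strictly_increasing (bound := expn^~ h) (fun _ _ _ _ _ _ => I)
            (@is_ell_bounded h) (is_ell_step hpos)).
  by exists [fset 0], l1; rewrite cardfs1.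
- apply: (max_over_strictly_increasing (bound := expn^~ h) (@subset_N0_fsetU1)
            (@is_ell_sharp_bounded h) (is_ell_sharp_step hpos)).
  by exists [fset 0; 1], l2; rewrite cardfs2.
- apply: (max_over_strictly_increasing (bound := expn^~ h) (fun _ _ _ _ _ _ => I)
            (@is_ell_sharp_bounded h) (is_ell_sharp_step hpos)).
  by exists [fset 0; 1], l2; rewrite cardfs2.
Qed.
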